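(* Let $\zeta \in \mathbb{C}^*$. The group $G_q(\zeta)$ is finite if and only if $\zeta$ is a primitive $n$-th root of unity for some $n \in \{2,3,4,5\}$.
   Context: Let $q$ be a formal parameter and let $R_q=\begin{pmatrix} q & 1\\ 0 & 1\end{pmatrix}$, $S_q=\begin{pmatrix} 0 & -q^{-1}\\ 1 & 0\end{pmatrix}\in \mathrm{GL}(2,\mathbb{Z}[q,q^{-1}])$. Let $G_q=\langle R_q,S_q\rangle\subset \mathrm{GL}(2,\mathbb{Z}[q,q^{-1}])$ be the group they generate. For $\zeta\in\mathbb{C}^*$, set $G_q(\zeta)=\{M_q|_{q=\zeta} : M_q\in G_q\}\subset \mathrm{GL}(2,\mathbb{C})$ (the group obtained by substituting $q=\zeta$ in all entries). *)

From HB Require Import structures.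
From mathcomp Require Import all_boot all_order all_algebra.
From mathcomp Require Import complex.
From mathcomp Require Import Rstruct.
Set Implicit Arguments. Unset Strict Implicit. Unset Printing Implicit Defensive.
Import Order.TTheory GRing.Theory Num.Theory.
Local Open Scope ring_scope.

Definition C : Type := complex Rdefinitions.R.
#[global] Hint Unfold C : core.

Definition Rmat (z : C) : 'M[C]_2 :=
  \matrix_(i < 2, j < 2)
    if (i == 0 :> nat) then (if (j == 0 :> nat) then z else 1) else
    (if (j == 0 :> nat) then 0 else 1).

Definition Smat (z : C) : 'M[C]_2 :=
  \matrix_(i < 2, j < 2)
    if (i == 0 :> nat) then (if (j == 0 :> nat) then 0 else - z^-1) else
    (if (j == 0 :> nat) then 1 else 0).

Definition letter_mx (z : C) (g : bool * bool) : 'M[C]_2 :=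
  let A := if g.1 then Rmat z else Smat z in
  if g.2 then invmx A else A.

Definition word_mx (z : C) (w : seq (bool * bool)) : 'M[C]_2 :=
  foldr (fun g M => letter_mx z g *m M) 1%:M w.

(* G_q(z): the specializations at q = z of the elements of
   G_q = <R_q, S_q>; every element of G_q is a word in R_q^{+-1}, S_q^{+-1},
   and specialization is multiplicative, so this is the set of word values. *)
Definition Gz (z : C) : 'M[C]_2 -> Prop := fun M => exists w, M = word_mx z w.

Definition finite_mxset (P : 'M[C]_2 -> Prop) : Prop :=
  exists s : seq 'M[C]_2, forall M, P M -> M \in s.

(* If z is a primitive n-th root of unity, R_z and S_z have entries in Z[z],
   which is Z[x] modulo the n-th cyclotomic polynomial.  For n = 2, 3, 4, 5 the
   orbit of the identity under left multiplication by the four generators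
   R^{+-1}, S^{+-1} is computed in this ring and checked to be closed; it has at
   most 600 elements.

   Conversely, in a finite group every element has finite order.  From
   R^N = [[z^N, 1 + z + ... + z^(N-1)], [0, 1]] = 1 we get that z is a root of
   unity other than 1; let n >= 2 be its order.  The element X = R^3 S is the
   companion matrix [[z^2 + z + 1, -z^2], [1, 0]], so the lower-left entry of
   X^N is u_N(z) for the integer Lucas sequence
   u_(k+2) = (x^2 + x + 1) u_(k+1) - x^2 u_k, and X^N = 1 makes z a root of u_N.
   Since the cyclotomic polynomial is irreducible over Q, every primitive n-th
   root of unity is a root of u_N, in particular w = exp(2 i pi / n).  But
   w^2 + w + 1 = w s with s = 1 + 2 cos(2 pi / n) real, hence
   u_N(w) = w^(N-1) v_N for the real Lucas sequence v_(k+2) = s v_(k+1) - v_k,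
   and for n >= 6 we have s >= 2, so v_N >= N. *)

From Stdlib Require Import Rbase Rtrigo_def Rtrigo1 Rtrigo_calc.
From Stdlib Require Lra Psatz.
From mathcomp Require Import all_boot all_order all_algebra.
From mathcomp Require Import cyclotomic algC complex Rstruct.
From mathcomp Require Import ring lra.
Import GRing.Theory Num.Theory.
Local Open Scope ring_scope.

Set Implicit Arguments.
Unset Strict Implicit.
Unset Printing Implicit Defensive.

Definition mx22 {R : Type} (a b c d : R) : 'M[R]_2 :=
  \matrix_(i < 2, j < 2)
    if (i == 0 :> nat) then (if (j == 0 :> nat) then a else b) else
    (if (j == 0 :> nat) then c else d).

Section Mx22.
Variable R : pzRingType.

Lemma mx22_inj (a b c d a' b' c' d' : R) :
  mx22 a b c d = mx22 a' b' c' d' -> [/\ a = a', b = b', c = c' & d = d'].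
Proof.
move=> e; have E i j := congr1 (fun A : 'M[R]_2 => A i j) e.
by move: (E 0 0) (E 0 1) (E 1 0) (E 1 1); rewrite !mxE.
Qed.

Lemma mx22_mul (a b c d a' b' c' d' : R) :
  mx22 a b c d *m mx22 a' b' c' d' =
  mx22 (a * a' + b * c') (a * b' + b * d') (c * a' + d * c') (c * b' + d * d').
Proof.
apply/matrixP => i j; rewrite !mxE !big_ord_recl big_ord0 addr0 !mxE.
by case: i => [[|[|i]] Hi] //; case: j => [[|[|j]] Hj].
Qed.

Lemma mx22_1 : mx22 1 0 0 1 = 1%:M :> 'M[R]_2.
Proof.
apply/matrixP => i j; rewrite !mxE.
by case: i => [[|[|i]] Hi] //; case: j => [[|[|j]] Hj].
Qed.

End Mx22.

Lemma mulmx1_invmx (R : comUnitRingType) n (A B : 'M[R]_n) :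
  A *m B = 1%:M -> invmx A = B.
Proof.
move=> AB; have [uA _] := mulmx1_unit AB.
by rewrite -[invmx A]mulmx1 -AB mulmxA mulVmx // mul1mx.
Qed.

Lemma RmatE z : Rmat z = mx22 z 1 0 1. Proof. by []. Qed.

Lemma SmatE z : Smat z = mx22 0 (- z^-1) 1 0. Proof. by []. Qed.

Section Generators.
Variable z : C.
Hypothesis z_neq0 : z != 0.

Lemma Rmat_mulV : Rmat z *m mx22 z^-1 (- z^-1) 0 1 = 1%:M.
Proof.
by rewrite RmatE mx22_mul -mx22_1; congr mx22; field.
Qed.

Lemma Smat_mulV : Smat z *m mx22 0 1 (- z) 0 = 1%:M.
Proof.
by rewrite SmatE mx22_mul -mx22_1; congr mx22; field.
Qed.

Lemma invmx_Rmat : invmx (Rmat z) = mx22 z^-1 (- z^-1) 0 1.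
Proof. exact: mulmx1_invmx Rmat_mulV. Qed.

Lemma invmx_Smat : invmx (Smat z) = mx22 0 1 (- z) 0.
Proof. exact: mulmx1_invmx Smat_mulV. Qed.

Lemma letter_mx_unit g : letter_mx z g \in unitmx.
Proof.
have [uR _] := mulmx1_unit Rmat_mulV; have [uS _] := mulmx1_unit Smat_mulV.
by case: g => [[] []]; rewrite /letter_mx /= ?unitmx_inv.
Qed.

Lemma word_mx_unit w : word_mx z w \in unitmx.
Proof.
elim: w => [|g w IH] /=; first exact: unitmx1.
by rewrite unitmx_mul letter_mx_unit.
Qed.

End Generators.

Lemma word_mx_cat z w1 w2 : word_mx z (w1 ++ w2) = word_mx z w1 *m word_mx z w2.
Proof. by elim: w1 => [|g w IH] /=; rewrite ?mul1mx // IH mulmxA. Qed.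

Lemma word_mx_pow z w k : word_mx z (flatten (nseq k w)) = word_mx z w ^+ k.
Proof.
elim: k => [|k IH]; first by rewrite expr0 /= idmxE.
by rewrite /= word_mx_cat IH exprS mulmxE.
Qed.

(* Integer polynomials as little-endian coefficient lists: unlike {poly int},
   they compute under vm_compute. *)
Definition cpoly := seq int.

Fixpoint cadd (p q : cpoly) : cpoly :=
  match p, q with
  | [::], _ => q
  | _, [::] => p
  | a :: p', b :: q' => (a + b) :: cadd p' q'
  end.

Definition cscale (a : int) (p : cpoly) : cpoly := map ( *%R a) p.

Definition csub (p q : cpoly) : cpoly := cadd p (cscale (-1) q).

Definition cmul (p q : cpoly) : cpoly :=
  foldr (fun a r => cadd (cscale a q) (0 :: r)) [::] p.

Definition cXn (k : nat) : cpoly := rcons (nseq k 0) 1.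

Fixpoint cpoly_eq (p q : cpoly) : bool :=
  match p, q with
  | [::], _ => all (eq_op^~ 0) q
  | _, [::] => all (eq_op^~ 0) p
  | a :: p', b :: q' => (a == b) && cpoly_eq p' q'
  end.

(* Reduction modulo x^d - c(x), by Horner's scheme. *)
Definition creduce (d : nat) (c p : cpoly) : cpoly :=
  foldr (fun a r => cadd (take d (a :: r)) (cmul (drop d (a :: r)) c)) [::] p.

Definition cmx := (cpoly * cpoly * cpoly * cpoly)%type.

Definition cmx_mul (d : nat) (c : cpoly) (A B : cmx) : cmx :=
  let mul p q := creduce d c (cmul p q) in
  let: (a1, b1, c1, d1) := A in let: (a2, b2, c2, d2) := B in
  (cadd (mul a1 a2) (mul b1 c2), cadd (mul a1 b2) (mul b1 d2),
   cadd (mul c1 a2) (mul d1 c2), cadd (mul c1 b2) (mul d1 d2)).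

Definition cmx_eq (A B : cmx) : bool :=
  let: (a1, b1, c1, d1) := A in let: (a2, b2, c2, d2) := B in
  [&& cpoly_eq a1 a2, cpoly_eq b1 b2, cpoly_eq c1 c2 & cpoly_eq d1 d2].

Definition cmx1 : cmx := ([:: 1], [::], [::], [:: 1]).

Section CpolyEval.
Variables (R : comPzRingType) (z : R).

Definition ceval (p : cpoly) : R := foldr (fun a r => a%:~R + z * r) 0 p.

Lemma ceval_add p q : ceval (cadd p q) = ceval p + ceval q.
Proof.
elim: p q => [|a p IH] [|b q] /=; rewrite ?add0r ?addr0 //.
by rewrite IH intrD mulrDr addrACA.
Qed.

Lemma ceval_scale a p : ceval (cscale a p) = a%:~R * ceval p.
Proof. by elim: p => [|b p IH] /=; rewrite ?mulr0 // IH intrM mulrDr mulrCA. Qed.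

Lemma ceval_sub p q : ceval (csub p q) = ceval p - ceval q.
Proof. by rewrite ceval_add ceval_scale mulN1r. Qed.

Lemma ceval_mul p q : ceval (cmul p q) = ceval p * ceval q.
Proof.
elim: p => [|a p IH] /=; first by rewrite mul0r.
by rewrite ceval_add ceval_scale /= IH add0r mulrDl mulrA.
Qed.

Lemma ceval_Xn k : ceval (cXn k) = z ^+ k.
Proof.
elim: k => [|k IH] /=; first by rewrite mulr0 addr0.
by rewrite IH add0r exprS.
Qed.

Lemma ceval_take_drop d p : ceval (take d p) + z ^+ d * ceval (drop d p) = ceval p.
Proof.
elim: d p => [|d IH] [|a p] //=; rewrite ?take0 ?drop0 ?expr0 ?mul1r ?add0r ?mulr0 //.
by rewrite -(IH p) exprS -mulrA mulrDr addrA.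
Qed.

Lemma cpoly_eqP p q : cpoly_eq p q -> ceval p = ceval q.
Proof.
have ceval0 r : all (eq_op^~ 0) r -> ceval r = 0.
  by elim: r => [|a r IH] //= /andP[/eqP-> /IH->]; rewrite mulr0 addr0.
elim: p q => [|a p IH] [|b q]; try by move=> /ceval0->.
by case/andP=> /eqP-> /IH /= ->.
Qed.

Definition cmx_eval (A : cmx) : 'M[R]_2 :=
  let: (a, b, c, d) := A in mx22 (ceval a) (ceval b) (ceval c) (ceval d).

Lemma cmx_eval_eq A B : cmx_eq A B -> cmx_eval A = cmx_eval B.
Proof.
case: A => [[[a1 b1] c1] d1]; case: B => [[[a2 b2] c2] d2] /=.
by case/and4P=> /cpoly_eqP-> /cpoly_eqP-> /cpoly_eqP-> /cpoly_eqP->.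
Qed.

Lemma cmx_eval1 : cmx_eval cmx1 = 1%:M.
Proof. by rewrite /= mulr0 !addr0 mx22_1. Qed.

Variables (d : nat) (c : cpoly).
Hypothesis zd : z ^+ d = ceval c.

Lemma ceval_reduce p : ceval (creduce d c p) = ceval p.
Proof.
elim: p => [|a p IH] //=.
by rewrite ceval_add ceval_mul -zd mulrC ceval_take_drop /= IH.
Qed.

Lemma cmx_eval_mul A B : cmx_eval (cmx_mul d c A B) = cmx_eval A *m cmx_eval B.
Proof.
case: A => [[[a1 b1] c1] d1]; case: B => [[[a2 b2] c2] d2].
by rewrite /= mx22_mul !ceval_add !ceval_reduce !ceval_mul.
Qed.

End CpolyEval.

Section Saturation.
Variables (T : Type) (mul : T -> T -> T) (eqv : rel T) (gens : seq T).

Definition closed_under (L : seq T) : bool :=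
  all (fun M => all (fun g => has (eqv (mul g M)) L) gens) L.

Definition add_fresh (acc : seq T * seq T) (M : T) : seq T * seq T :=
  let: (seen, fresh) := acc in
  if has (eqv M) seen then acc else (M :: seen, M :: fresh).

Fixpoint saturate (fuel : nat) (seen frontier : seq T) : seq T :=
  if fuel is k.+1 then
    if frontier is [::] then seen else
    let: (seen', fresh) :=
      foldl add_fresh (seen, [::]) [seq mul g M | M <- frontier, g <- gens] in
    saturate k seen' fresh
  else seen.

End Saturation.

Lemma prim_root_neq0 (R : nzRingType) n (z : R) : n.-primitive_root z -> z != 0.
Proof.
move=> pz; apply: contra_eq_neq (prim_expr_order pz) => ->.
by rewrite expr0n gtn_eqF ?(prim_order_gt0 pz) // eq_sym oner_neq0.
Qed.

Definition letters : seq (bool * bool) :=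
  [:: (true, false); (true, true); (false, false); (false, true)].

Definition cmx_letter (zinv : cpoly) (g : bool * bool) : cmx :=
  match g with
  | (true, false) => ([:: 0; 1], [:: 1], [::], [:: 1])
  | (true, true) => (zinv, cscale (-1) zinv, [::], [:: 1])
  | (false, false) => ([::], cscale (-1) zinv, [:: 1], [::])
  | (false, true) => ([::], [:: 1], [:: 0; -1], [::])
  end.

Lemma letter_mx_cmx (z : C) (zinv : cpoly) g :
  z != 0 -> ceval z zinv = z^-1 -> letter_mx z g = cmx_eval z (cmx_letter zinv g).
Proof.
move=> z0 zi; rewrite /letter_mx.
case: g => [[] []] /=; rewrite ?invmx_Rmat ?invmx_Smat ?ceval_scale ?zi //;
  by congr mx22; rewrite /= ?(mulr0, addr0, add0r, mulr1z, mulr1, mulrN1z, mulrN1, mulN1r).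
Qed.

Lemma finite_Gz_closed (z : C) (d : nat) (c zinv : cpoly) (L : seq cmx) :
  z != 0 -> z ^+ d = ceval z c -> ceval z zinv = z^-1 ->
  closed_under (cmx_mul d c) cmx_eq (map (cmx_letter zinv) letters) L ->
  has (cmx_eq cmx1) L -> finite_mxset (Gz z).
Proof.
move=> z0 zd zi /allP closedL /hasP[I IL /(cmx_eval_eq z) evI].
exists (map (cmx_eval z) L) => _ [w ->]; apply/mapP.
elim: w => [|g w [M ML eM]] /=; first by exists I; rewrite // -evI cmx_eval1.
have gL : cmx_letter zinv g \in map (cmx_letter zinv) letters.
  by apply: map_f; case: g => [[] []].
have /allP/(_ _ gL)/hasP[M' M'L /(cmx_eval_eq z) eM'] := closedL M ML.
by exists M' => //; rewrite -eM' (cmx_eval_mul zd) eM (letter_mx_cmx _ z0 zi).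
Qed.

Definition cyclotomic_factor (n k d : nat) (c : cpoly) : bool :=
  cpoly_eq (cmul (csub (cXn k) [:: 1]) (csub (cXn d) c)) (csub (cXn n) [:: 1]).

Lemma prim_root_reduction (R : idomainType) (z : R) n k d c :
  n.-primitive_root z -> (0 < k < n)%N -> cyclotomic_factor n k d c ->
  z ^+ d = ceval z c.
Proof.
move=> pz /andP[k0 kn] /(cpoly_eqP z).
rewrite ceval_mul !ceval_sub !ceval_Xn /= mulr0 addr0 (prim_expr_order pz) subrr.
move/eqP; rewrite mulf_eq0 !subr_eq0 => /orP[/eqP zk|/eqP //].
have : (n %| k)%N by rewrite (prim_order_dvd pz) zk.
by move/(dvdn_leq k0); rewrite leqNgt kn.
Qed.

(* [saturate] needs no correctness proof: its result is checked. *)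
Definition group_certificate (n d : nat) (c : cpoly) : bool :=
  let gens := map (cmx_letter (cXn n.-1)) letters in
  let G := saturate (cmx_mul d c) cmx_eq gens 100 [:: cmx1] [:: cmx1] in
  closed_under (cmx_mul d c) cmx_eq gens G && has (cmx_eq cmx1) G.

Lemma finite_Gz_certificate (z : C) n k d c :
  n.-primitive_root z -> (0 < k < n)%N -> cyclotomic_factor n k d c ->
  group_certificate n d c -> finite_mxset (Gz z).
Proof.
move=> pz kn fac /andP[closedG hasI].
have z0 := prim_root_neq0 pz.
apply: finite_Gz_closed closedG hasI => //; first exact: prim_root_reduction pz kn fac.
rewrite ceval_Xn; apply: (mulfI z0).
by rewrite mulfV // -exprS prednK ?prim_expr_order ?(prim_order_gt0 pz).
Qed.

Lemma finite_Gz_prim_root (z : C) n :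
  (2 <= n <= 5)%N -> n.-primitive_root z -> finite_mxset (Gz z).
Proof.
case: n => [|[|[|[|[|[|n]]]]]] //= _ pz.
- by apply: (finite_Gz_certificate (k := 1) (d := 1) (c := [:: -1]) pz); vm_compute.
- by apply: (finite_Gz_certificate (k := 1) (d := 2) (c := [:: -1; -1]) pz); vm_compute.
- by apply: (finite_Gz_certificate (k := 2) (d := 2) (c := [:: -1]) pz); vm_compute.
- by apply: (finite_Gz_certificate (k := 1) (d := 4) (c := [:: -1; -1; -1; -1]) pz);
    vm_compute.
Qed.

Lemma nat_ind2 (P : nat -> Prop) :
  P 0%N -> P 1%N -> (forall n, P n -> P n.+1 -> P n.+2) -> forall n, P n.
Proof.
move=> P0 P1 PSS n; suff: P n /\ P n.+1 by case.
by elim: n => [|n [Pn Pn1]]; split => //; apply: PSS.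
Qed.

Section Lucas.
Variable R : comPzRingType.

Fixpoint lucas_pair (s d : R) (n : nat) : R * R :=
  if n is n'.+1 then let: (u, v) := lucas_pair s d n' in (v, s * v - d * u)
  else (0, 1).

Definition lucas (s d : R) (n : nat) : R := (lucas_pair s d n).1.

Lemma lucas0 s d : lucas s d 0 = 0. Proof. by []. Qed.

Lemma lucas1 s d : lucas s d 1 = 1. Proof. by []. Qed.

Lemma lucasSS s d n : lucas s d n.+2 = s * lucas s d n.+1 - d * lucas s d n.
Proof. by rewrite /lucas /=; case: (lucas_pair s d n). Qed.

Lemma lucas_homog (c s d : R) n :
  lucas (c * s) (c ^+ 2 * d) n * c = c ^+ n * lucas s d n.
Proof.
elim/nat_ind2: n => [||n IH0 IH1]; first by rewrite !lucas0 mul0r mulr0.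
  by rewrite !lucas1 mul1r mulr1 expr1.
by rewrite !lucasSS mulrBl -(mulrA (c * s)) -(mulrA (c ^+ 2 * d)) IH1 IH0 !exprS; ring.
Qed.

Lemma companion_mx_pow (s d : R) n :
  mx22 s (- d) 1 0 ^+ n.+1 =
  mx22 (lucas s d n.+2) (- d * lucas s d n.+1) (lucas s d n.+1) (- d * lucas s d n).
Proof.
elim: n => [|n IH].
  by rewrite expr1 lucasSS lucas1 lucas0; congr mx22; ring.
rewrite exprSr IH -mulmxE mx22_mul [lucas s d n.+3]lucasSS [lucas s d n.+2]lucasSS.
by congr mx22; ring.
Qed.

End Lucas.

Lemma rmorph_lucas (R S : comPzRingType) (f : {rmorphism R -> S}) s d n :
  f (lucas s d n) = lucas (f s) (f d) n.
Proof.
elim/nat_ind2: n => [||n IH0 IH1]; rewrite ?rmorph0 ?rmorph1 //.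
by rewrite !lucasSS rmorphB !rmorphM IH0 IH1.
Qed.

Lemma lucas_ge (R : realDomainType) (s : R) n : 2 <= s -> n%:R <= lucas s 1 n.
Proof.
move=> s2; suff: n%:R <= lucas s 1 n /\ lucas s 1 n + 1 <= lucas s 1 n.+1 by case.
elim: n => [|n [IH0 IH1]]; first by rewrite lucas0 lucas1 add0r.
rewrite lucasSS mul1r mulrSr; split; first lra.
have := ler0n R n; nra.
Qed.

Lemma horner_prod_Cyclotomic (R : idomainType) (w : R) m : (0 < m)%N ->
  w ^+ m - 1 = \prod_(d <- divisors m) (map_poly intr 'Phi_d).[w].
Proof.
move=> m0; rewrite -horner_prod -rmorph_prod prod_Cyclotomic //.
by rewrite rmorphB rmorph1 /= map_polyXn !hornerE.
Qed.

Lemma Cyclotomic_root_unity (R : idomainType) (w : R) m : (0 < m)%N ->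
  root (map_poly intr 'Phi_m) w -> w ^+ m = 1.
Proof.
move=> m0 Phi_w; apply/eqP; rewrite -subr_eq0 horner_prod_Cyclotomic //.
rewrite (big_rem m) -?dvdn_divisors //=.
by rewrite (eqP Phi_w) mul0r.
Qed.

Lemma prim_root_Cyclotomic (R : idomainType) (w : R) m :
  m.-primitive_root w -> root (map_poly intr 'Phi_m) w.
Proof.
move=> pw; have m0 := prim_order_gt0 pw.
have /eqP := horner_prod_Cyclotomic w m0; rewrite prim_expr_order // subrr.
rewrite eq_sym prodf_seq_eq0 => /hasP[d]; rewrite -dvdn_divisors // => dm /= Phi_w.
have d0 : (0 < d)%N := dvdn_gt0 m0 dm.
have md : (m %| d)%N by rewrite (prim_order_dvd pw) (Cyclotomic_root_unity d0 Phi_w).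
by have /eqP-> : m == d by rewrite eqn_dvd md dm.
Qed.

Lemma ratr_map_intr (F : numFieldType) (p : {poly int}) :
  map_poly (ratr : rat -> F) (map_poly intr p) = map_poly intr p.
Proof. by rewrite -map_poly_comp; apply: eq_map_poly => x /=; rewrite ratr_int. Qed.

Lemma Cyclotomic_dvdp (F : numFieldType) m (z : F) (p : {poly int}) :
  m.-primitive_root z -> root (map_poly intr p) z ->
  map_poly (intr : int -> rat) 'Phi_m %| map_poly intr p.
Proof.
move=> pz pz0; have m0 := prim_order_gt0 pz.
(* The gcd g of p and Phi_m has a root x in algC, a primitive m-th root of
   unity whose minimal polynomial is Phi_m; hence Phi_m divides g. *)
set Phi := map_poly intr 'Phi_m; set q := map_poly intr p.
have Phi_neq0 : Phi != 0.
  rewrite -size_poly_eq0 size_map_inj_poly ?size_poly_eq0 ?monic_neq0 ?Cyclotomic_monic //.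
  exact: intr_inj.
set g := gcdp q Phi.
have gz0 : root (map_poly (ratr : rat -> F) g) z.
  by rewrite gcdp_map root_gcd !ratr_map_intr pz0 prim_root_Cyclotomic.
have g_gt1 : (1 < size g)%N.
  rewrite -(size_map_poly (ratr : {rmorphism rat -> F})).
  by apply: root_size_gt1 gz0; rewrite map_poly_eq0 gcdp_eq0 negb_and Phi_neq0 orbT.
have [x gx0] : exists x : algC, root (map_poly ratr g) x.
  by apply/closed_rootP; rewrite size_map_poly neq_ltn g_gt1 orbT.
have px : m.-primitive_root x.
  have [w pw] := C_prim_root_exists m0.
  rewrite -(root_cyclotomic pw) -(Cintr_Cyclotomic pw) -ratr_map_intr.
  by apply: root_dvdp gx0; rewrite dvdp_map dvdp_gcdr.
have [phi [Dphi _] phi_dvd] := minCpolyP x.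
have <- : phi = Phi.
  apply: (@map_poly_inj _ _ (ratr : {rmorphism rat -> algC})).
  by rewrite -Dphi (minCpoly_cyclotomic px) -(Cintr_Cyclotomic px) ratr_map_intr.
by apply: dvdp_trans (dvdp_gcdl q Phi); rewrite -phi_dvd.
Qed.

Lemma prim_root_transfer (F : numFieldType) m (z w : F) (p : {poly int}) :
  m.-primitive_root z -> m.-primitive_root w ->
  root (map_poly intr p) z -> root (map_poly intr p) w.
Proof.
move=> pz pw /(Cyclotomic_dvdp pz) /dvdpP[r Dp].
have := congr1 (map_poly (ratr : rat -> F)) Dp; rewrite rmorphM /= !ratr_map_intr => ->.
by rewrite /root hornerM (eqP (prim_root_Cyclotomic pw)) mulr0.
Qed.

Section TrigBounds.
Local Open Scope R_scope.

Definition root_angle (m : nat) : R := 2 * PI / INR m.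

Lemma INR_mul_root_angle (m : nat) : (0 < m)%N -> INR m * root_angle m = 2 * PI.
Proof.
move=> m0; have m0R : INR m <> 0 by apply: not_0_INR; case: m m0.
by rewrite /root_angle /Rdiv Rmult_comm Rmult_assoc Rinv_l // Rmult_1_r.
Qed.

Lemma cos_lt1 (t : R) : 0 < t < 2 * PI -> cos t < 1.
Proof.
move=> [t0 t2PI]; have -> : t = 2 * (t / 2) by Lra.lra.
rewrite cos_2a_sin.
have : 0 < sin (t / 2) by apply: sin_gt_0; Lra.lra.
by Psatz.nra.
Qed.

Lemma cos_root_angle_lt1 (k m : nat) : (0 < k)%N -> (k < m)%N ->
  cos (INR k * root_angle m) < 1.
Proof.
move=> /leP k0 /leP km; apply: cos_lt1.
have k0R : 0 < INR k by apply: lt_0_INR.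
have kmR : INR k < INR m by apply: lt_INR.
have PI0 := PI_RGT_0.
have m0R : 0 < INR m by Lra.lra.
have mu1 : INR m * / INR m = 1 by apply: Rinv_r; Lra.lra.
have u0 : 0 < / INR m by apply: Rinv_0_lt_compat.
have ku1 : INR k * / INR m < 1 by Psatz.nra.
have := Rmult_lt_0_compat _ _ PI0 (Rmult_lt_0_compat _ _ k0R u0).
have := Rmult_lt_compat_l _ _ _ PI0 ku1.
rewrite /root_angle /Rdiv; split; Lra.lra.
Qed.

Lemma cos_root_angle_ge_half (m : nat) : (6 <= m)%N -> 1 / 2 <= cos (root_angle m).
Proof.
move=> m6; have m6R : 6 <= INR m.
  by have := le_INR 6 m (elimT leP m6); rewrite /INR; Lra.lra.
have PI0 := PI_RGT_0; rewrite -cos_PI3 /root_angle.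
have : 0 < 2 * PI / INR m <= PI / 3.
  split; first by apply: Rdiv_lt_0_compat; Lra.lra.
  have : / INR m <= / 6 by apply: Rinv_le_contravar; Lra.lra.
  rewrite /Rdiv; Psatz.nra.
case=> t0 [tPI3 | ->]; last exact: Rle_refl.
by apply/Rlt_le/cos_decreasing_1; Lra.lra.
Qed.

End TrigBounds.

Local Open Scope complex_scope.

Definition cis (t : R) : C := Complex (cos t) (sin t).

Lemma cis_pow t k : cis t ^+ k = cis (INR k * t).
Proof.
elim: k => [|k IH]; first by rewrite expr0 /cis Rmult_0_l cos_0 sin_0.
rewrite exprS IH /cis S_INR Rmult_plus_distr_r Rmult_1_l Rplus_comm cos_plus sin_plus.
by apply/eqP; rewrite eq_complex /= !RminusE !RplusE !RmultE eqxx addrC eqxx.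
Qed.

Lemma cis_trace t : cis t ^+ 2 + cis t + 1 = cis t * (1 + 2 * cos t)%:C.
Proof.
have sin2 : sin t * sin t = 1 - cos t * cos t.
  by have := sin2_cos2 t; rewrite /Rsqr RplusE !RmultE R1E => <-; ring.
apply/eqP; rewrite eq_complex /= !mulr0 !subr0 !addr0 sin2.
by apply/andP; split; apply/eqP; ring.
Qed.

Lemma prim_root_cis m : (0 < m)%N -> m.-primitive_root (cis (root_angle m)).
Proof.
move=> m0; have wm : cis (root_angle m) ^+ m = 1.
  by rewrite cis_pow INR_mul_root_angle // /cis cos_2PI sin_2PI.
have [k pk km] := prim_order_exists m0 wm.
have [km_eq|k_neq_m] := eqVneq k m; first by rewrite km_eq in pk.
have kltm : (k < m)%N by rewrite ltn_neqAle k_neq_m dvdn_leq.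
have := prim_expr_order pk; rewrite cis_pow => /(congr1 (@complex.Re _)) /= cos1.
by have := cos_root_angle_lt1 (prim_order_gt0 pk) kltm; rewrite cos1 => /Rlt_irrefl.
Qed.

Lemma prim_root_trace_ge2 m : (6 <= m)%N ->
  exists2 w : C, m.-primitive_root w & exists2 s : R, 2 <= s & w ^+ 2 + w + 1 = w * s%:C.
Proof.
move=> m6; exists (cis (root_angle m)); first by apply: prim_root_cis; case: m m6.
exists (1 + 2 * cos (root_angle m)); last exact: cis_trace.
by have /RleP := cos_root_angle_ge_half m6; rewrite RdivE R1E IZRposE INRE /=; lra.
Qed.

Lemma unit_pow_periodic (R : unitRingType) (A : R) (s : seq R) :
  A \is a GRing.unit -> (forall k, A ^+ k \in s) -> exists2 N, (0 < N)%N & A ^+ N = 1.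
Proof.
move=> uA As; pose t := mkseq (fun k => A ^+ k) (size s).+1.
have t_sub_s : {subset t <= s} by move=> _ /mapP[k _ ->].
have /(uniqPn 0)[i [j [ij jt]]] : ~~ uniq t.
  by apply/negP => /uniq_leq_size/(_ t_sub_s); rewrite size_mkseq ltnn.
rewrite size_mkseq in jt; rewrite !nth_mkseq ?(ltn_trans ij) // => eij.
exists (j - i)%N; first by rewrite subn_gt0.
by apply: (mulrI (unitrX i uA)); rewrite -exprD (subnKC (ltnW ij)) -eij mulr1.
Qed.

Lemma word_mx_periodic (z : C) w : z != 0 -> finite_mxset (Gz z) ->
  exists2 N, (0 < N)%N & word_mx z w ^+ N = 1.
Proof.
move=> z0 [s Gs]; apply: (unit_pow_periodic (s := s)); first exact: word_mx_unit.
by move=> k; apply: Gs; exists (flatten (nseq k w)); rewrite word_mx_pow.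
Qed.

Lemma Rmat_pow (z : C) k : Rmat z ^+ k = mx22 (z ^+ k) (\sum_(l < k) z ^+ l) 0 1.
Proof.
elim: k => [|k IH]; first by rewrite expr0 big_ord0 -idmxE -mx22_1.
rewrite exprS IH -mulmxE RmatE mx22_mul big_ord_recl expr0.
congr mx22; rewrite ?(mul0r, mul1r, mulr0, mulr1, add0r, addr0) -?exprS //.
by rewrite mulr_sumr addrC; congr (_ + _); apply: eq_bigr => l _; rewrite exprS.
Qed.

Lemma finite_Gz_prim_root_gt1 (z : C) : z != 0 -> finite_mxset (Gz z) ->
  exists2 m, (1 < m)%N & m.-primitive_root z.
Proof.
move=> z0 fin; have [N N0] := word_mx_periodic [:: (true, false)] z0 fin.
rewrite /= mulmx1 /letter_mx /= Rmat_pow -idmxE -mx22_1 => /mx22_inj[zN sum0 _ _].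
have [m pm _] := prim_order_exists N0 zN.
exists m => //; rewrite ltn_neqAle (prim_order_gt0 pm) andbT.
apply/eqP => m1; move: pm; rewrite -m1 => /prim_expr_order; rewrite expr1 => z1.
move: sum0; rewrite z1 (eq_bigr (fun=> 1)) => [|l _]; last by rewrite expr1n.
by rewrite sumr_const card_ord => /eqP; rewrite pnatr_eq0 gtn_eqF.
Qed.

Definition word_R3S : seq (bool * bool) :=
  [:: (true, false); (true, false); (true, false); (false, false)].

Lemma word_mx_R3S (z : C) : z != 0 ->
  word_mx z word_R3S = mx22 (z ^+ 2 + z + 1) (- z ^+ 2) 1 0.
Proof.
move=> z0; rewrite /= mulmx1 /letter_mx /= RmatE SmatE !mx22_mul.
by congr mx22; field.
Qed.

Lemma horner_lucas_trace (R : comNzRingType) (x : R) n :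
  (map_poly intr (lucas ('X^2 + 'X + 1) 'X^2 n)).[x] = lucas (x ^+ 2 + x + 1) (x ^+ 2) n.
Proof.
rewrite -horner_evalE !rmorph_lucas /= !rmorphD /= rmorph1 map_polyXn map_polyX.
by rewrite !horner_evalE !hornerE.
Qed.

Lemma lucas_trace_neq0 (R : rcfType) (w : R[i]) (s : R) n :
  w != 0 -> 2 <= s -> w ^+ 2 + w + 1 = w * s%:C ->
  lucas (w ^+ 2 + w + 1) (w ^+ 2) n.+1 != 0.
Proof.
move=> w0 s2 ws; apply/eqP => L0.
have := lucas_homog w s%:C 1 n.+1.
rewrite mulr1 -ws L0 mul0r -(rmorph1 (real_complex R)) -rmorph_lucas => /esym/eqP.
rewrite mulf_eq0 expf_eq0 (negbTE w0) andbF /= => /eqP/(congr1 (@complex.Re _)) /= L0'.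
by have := lucas_ge n.+1 s2; rewrite L0' lern0.
Qed.

Lemma finite_Gz_prim_root_le5 (z : C) m :
  z != 0 -> finite_mxset (Gz z) -> m.-primitive_root z -> (m <= 5)%N.
Proof.
move=> z0 fin pz; rewrite leqNgt; apply/negP => m6.
have [w pw [s s2 ws]] := prim_root_trace_ge2 m6.
have [[|n] // _] := word_mx_periodic word_R3S z0 fin.
rewrite word_mx_R3S // companion_mx_pow -idmxE -mx22_1 => /mx22_inj[_ _ Lz _].
pose u : {poly int} := lucas ('X^2 + 'X + 1) 'X^2 n.+1.
have /(prim_root_transfer pz pw) : root (map_poly intr u) z.
  by rewrite /root horner_lucas_trace Lz.
rewrite /root horner_lucas_trace.
by rewrite (negbTE (lucas_trace_neq0 n (prim_root_neq0 pw) s2 ws)).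
Qed.

Theorem theorem1p1 (z : C) (hz : z != 0) :
  finite_mxset (Gz z) <->
  exists n : nat, (2 <= n <= 5)%N /\ n.-primitive_root z.
Proof.
split=> [fin | [n [n25 pz]]]; last exact: finite_Gz_prim_root n25 pz.
have [m m1 pm] := finite_Gz_prim_root_gt1 hz fin.
by exists m; rewrite m1 (finite_Gz_prim_root_le5 hz fin pm).
Qed.
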